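(* Every rule of the sequent calculus $\mathbf{G}$ for $\text{HXPath}_{\rm D}$ preserves validity: for every instance of every rule of $\mathbf{G}$ (including (Cut), (WL), (WR)), if all premisses of the instance are valid sequents, then its conclusion is a valid sequent.
   Context: Syntax of $\text{HXPath}_{\rm D}$: fix pairwise disjoint sets $\mathsf{Prop}$ (propositions, countably infinite), $\mathsf{Nom}$ (nominals, countably infinite), $\mathsf{Mod}$ (modalities, finite), $\mathsf{Cmp}$ (comparisons, finite). Path expressions $\alpha,\beta ::= \mathsf{a} \mid i{:} \mid \varphi? \mid \alpha\beta$ and node expressions $\varphi,\psi ::= p \mid i \mid \bot \mid \varphi\to\psi \mid @_i\varphi \mid \langle \mathsf{a}\rangle\varphi \mid \langle\alpha =_{\mathsf{c}} \beta\rangle \mid \langle \alpha\neq_{\mathsf{c}}\beta\rangle$, with $p\in\mathsf{Prop}$, $i\in\mathsf{Nom}$, $\mathsf{a}\in\mathsf{Mod}$, $\mathsf{c}\in\mathsf{Cmp}$. Abbreviations: $\top:=\bot\to\bot$, $\neg\varphi:=\varphi\to\bot$, $\varphi\lor\psi := \neg\varphi\to\psi$, $\varphi\land\psi:=\neg(\varphi\to\neg\psi)$, $\varphi\leftrightarrow\psi$ as usual; $\epsilon:=\top?$; $\langle j{:}\rangle\varphi := @_j\varphi$, $\langle\psi?\rangle\varphi:=\psi\land\varphi$, $\langle\alpha\beta\rangle\varphi:=\langle\alpha\rangle\langle\beta\rangle\varphi$, $[\alpha]\varphi:=\neg\langle\alpha\rangle\neg\varphi$. The symbol $\blacktriangle$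 stands for either $=_{\mathsf{c}}$ or $\neq_{\mathsf{c}}$ (for some $\mathsf{c}$). Models: $\mathcal{M}=\langle N,\{R_{\mathsf a}\}_{\mathsf a\in\mathsf{Mod}},\{\approx_{\mathsf c}\}_{\mathsf c\in\mathsf{Cmp}},g,V\rangle$ with $N\neq\emptyset$, each $R_{\mathsf a}\subseteq N\times N$, each $\approx_{\mathsf c}$ an equivalence relation on $N$, $g:\mathsf{Nom}\to N$, $V:\mathsf{Prop}\to 2^N$. Semantics: $\mathcal M,n,n'\Vdash \mathsf a$ iff $nR_{\mathsf a}n'$; $\mathcal M,n,n'\Vdash i{:}$ iff $g(i)=n'$; $\mathcal M,n,n'\Vdash\varphi?$ iff $n=n'$ and $\mathcal M,n\Vdash\varphi$; $\mathcal M,n,n'\Vdash\alpha\beta$ iff there is $n''$ with $\mathcal M,n,n''\Vdash\alpha$ and $\mathcal M,n'',n'\Vdash\beta$; $\mathcal M,n\Vdash p$ iff $n\in V(p)$; $\mathcal M,n\Vdash i$ iff $g(i)=n$; $\bot$ never holds; $\to$ classical; $\mathcal M,n\Vdash @_i\varphi$ iff $\mathcal M,g(i)\Vdash\varphi$; $\mathcal M,n\Vdash\langle\mathsf a\rangle\varphi$ iff some $n'$ has $nR_{\mathsf a}n'$ and $\mathcal M,n'\Vdash\varphi$; $\mathcal M,n\Vdash\langle\alpha=_{\mathsf c}\beta\rangle$ (resp. $\langle\alpha\neq_{\mathsf c}\beta\rangle$) iff there are $n',n''$ with $\mathcal M,n,n'\Vdash\alpha$, $\mathcal M,n,n''\Vdash\beta$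 and $n'\approx_{\mathsf c}n''$ (resp. $n'\not\approx_{\mathsf c}n''$). Sequents: a sequent $\Gamma\vdash\Delta$ consists of finite (possibly empty) sets $\Gamma,\Delta$ of node expressions each of the form $\langle i{:}\blacktriangle j{:}\rangle$ or $@_i\varphi$. It is valid iff for every model $\mathcal M$ and node $n$, if $\mathcal M,n\Vdash\gamma$ for all $\gamma\in\Gamma$ then $\mathcal M,n\Vdash\delta$ for some $\delta\in\Delta$. Notation ''$\varphi,\Gamma$'' means $\{\varphi\}\cup\Gamma$. The calculus $\mathbf{G}$ (each rule written premisses $\Rightarrow$ conclusion): (Ax) axiom $\varphi,\Gamma\vdash\Delta,\varphi$ where $\varphi$ is of the form $@_ip$, $@_ij$ or $\langle i{:}=_{\mathsf c}j{:}\rangle$; ($\bot$) axiom $@_i\bot,\Gamma\vdash\Delta$; ($\to$L) $\Gamma\vdash\Delta,@_i\varphi$ and $@_i\psi,\Gamma\vdash\Delta$ $\Rightarrow$ $@_i(\varphi\to\psi),\Gamma\vdash\Delta$; ($\to$R) $@_i\varphi,\Gamma\vdash\Delta,@_i\psi\Rightarrow\Gamma\vdash\Delta,@_i(\varphi\to\psi)$; ($@$T) $@_ii,\Gamma\vdash\Delta\Rightarrow\Gamma\vdash\Delta$; ($@5$) $@_jk,@_ij,@_ik,\Gamma\vdash\Delta\Rightarrow @_ij,@_ik,\Gamma\vdash\Delta$; (Nom) $@_ij,\Gamma\vdash\Delta\Rightarrow\Gamma\vdash\Delta$, $j$ not in the conclusion; (S$_1$) $@_j\varphi,@_ij,@_i\varphi,\Gamma\vdash\Delta\Rightarrow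 @_ij,@_i\varphi,\Gamma\vdash\Delta$, $\varphi$ of the form $p$, $\bot$ or $\langle\mathsf a\rangle k$; (S$_2$) $@_i\langle\mathsf a\rangle k,@_jk,@_i\langle\mathsf a\rangle j,\Gamma\vdash\Delta\Rightarrow @_jk,@_i\langle\mathsf a\rangle j,\Gamma\vdash\Delta$; (S$_3$) $\langle j{:}=_{\mathsf c}k{:}\rangle,@_ij,\langle i{:}=_{\mathsf c}k{:}\rangle,\Gamma\vdash\Delta\Rightarrow @_ij,\langle i{:}=_{\mathsf c}k{:}\rangle,\Gamma\vdash\Delta$; ($@$L) $@_i\varphi,\Gamma\vdash\Delta\Rightarrow @_j@_i\varphi,\Gamma\vdash\Delta$; ($@$R) $\Gamma\vdash\Delta,@_i\varphi\Rightarrow\Gamma\vdash\Delta,@_j@_i\varphi$; ($\langle\mathsf a\rangle$L) $@_i\langle\mathsf a\rangle j,@_j\varphi,\Gamma\vdash\Delta\Rightarrow @_i\langle\mathsf a\rangle\varphi,\Gamma\vdash\Delta$, $j$ not in the conclusion; ($\langle\mathsf a\rangle$R) $@_i\langle\mathsf a\rangle j,\Gamma\vdash\Delta,@_i\langle\mathsf a\rangle\varphi,@_j\varphi\Rightarrow @_i\langle\mathsf a\rangle j,\Gamma\vdash\Delta,@_i\langle\mathsf a\rangle\varphi$; ($\langle\blacktriangle\rangle$L) $@_i\langle\alpha\rangle j,@_i\langle\beta\rangle k,\langle j{:}\blacktriangle k{:}\rangle,\Gamma\vdash\Delta\Rightarrow @_i\langle\alpha\blacktriangle\beta\rangle,\Gamma\vdash\Delta$,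 $j,k$ distinct and not in the conclusion; ($\langle\blacktriangle\rangle$R) $@_i\langle\alpha\rangle j,@_i\langle\beta\rangle k,\Gamma\vdash\Delta,@_i\langle\alpha\blacktriangle\beta\rangle,\langle j{:}\blacktriangle k{:}\rangle\Rightarrow @_i\langle\alpha\rangle j,@_i\langle\beta\rangle k,\Gamma\vdash\Delta,@_i\langle\alpha\blacktriangle\beta\rangle$; (EqT) $\langle i{:}=_{\mathsf c}i{:}\rangle,\Gamma\vdash\Delta\Rightarrow\Gamma\vdash\Delta$; (Eq5) $\langle j{:}=_{\mathsf c}k{:}\rangle,\langle i{:}=_{\mathsf c}j{:}\rangle,\langle i{:}=_{\mathsf c}k{:}\rangle,\Gamma\vdash\Delta\Rightarrow\langle i{:}=_{\mathsf c}j{:}\rangle,\langle i{:}=_{\mathsf c}k{:}\rangle,\Gamma\vdash\Delta$; (NEqL) $\Gamma\vdash\Delta,\langle i{:}=_{\mathsf c}j{:}\rangle\Rightarrow\langle i{:}\neq_{\mathsf c}j{:}\rangle,\Gamma\vdash\Delta$; (NEqR) $\langle i{:}=_{\mathsf c}j{:}\rangle,\Gamma\vdash\Delta\Rightarrow\Gamma\vdash\Delta,\langle i{:}\neq_{\mathsf c}j{:}\rangle$; (Cut) $\Gamma\vdash\Delta,\varphi$ and $\varphi,\Gamma'\vdash\Delta'\Rightarrow\Gamma,\Gamma'\vdash\Delta,\Delta'$; (WL) $\Gamma\vdash\Delta\Rightarrow\varphi,\Gamma\vdash\Delta$; (WR) $\Gamma\vdash\Delta\Rightarrow\Gamma\vdash\Delta,\varphi$.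 Here $@_i\langle\alpha\rangle j$ for a path $\alpha$ is understood via the abbreviations above. *)

From Stdlib Require Import List.
From mathcomp Require Import ssreflect ssrbool eqtype fintype.
Import ListNotations.

Set Implicit Arguments.

(* Prop = nat (propositions), Nom = nat (nominals): both countably infinite.
   Mod and Cmp are finite types. *)

Inductive path (Mod Cmp : Type) : Type :=
| PMod  : Mod -> path Mod Cmp
| PNom  : nat -> path Mod Cmp
| PTest : node Mod Cmp -> path Mod Cmp
| PComp : path Mod Cmp -> path Mod Cmp -> path Mod Cmp
with node (Mod Cmp : Type) : Type :=
| NProp : nat -> node Mod Cmp
| NNom  : nat -> node Mod Cmp
| NBot  : node Mod Cmp
| NImp  : node Mod Cmp -> node Mod Cmp -> node Mod Cmp
| NAt   : nat -> node Mod Cmp -> node Mod Cmp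
| NDia  : Mod -> node Mod Cmp -> node Mod Cmp
| NEq   : Cmp -> path Mod Cmp -> path Mod Cmp -> node Mod Cmp
| NNeq  : Cmp -> path Mod Cmp -> path Mod Cmp -> node Mod Cmp.

Arguments PMod {Mod Cmp}. Arguments PNom {Mod Cmp}. Arguments PTest {Mod Cmp}.
Arguments PComp {Mod Cmp}. Arguments NProp {Mod Cmp}. Arguments NNom {Mod Cmp}.
Arguments NBot {Mod Cmp}. Arguments NImp {Mod Cmp}. Arguments NAt {Mod Cmp}.
Arguments NDia {Mod Cmp}. Arguments NEq {Mod Cmp}. Arguments NNeq {Mod Cmp}.

Definition NTop {Mod Cmp : Type} : node Mod Cmp := NImp NBot NBot.
Definition NNeg {Mod Cmp : Type} (f : node Mod Cmp) : node Mod Cmp := NImp f NBot.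
Definition NAnd {Mod Cmp : Type} (f g : node Mod Cmp) : node Mod Cmp :=
  NNeg (NImp f (NNeg g)).

Fixpoint dia {Mod Cmp : Type} (a : path Mod Cmp) (f : node Mod Cmp) : node Mod Cmp :=
  match a with
  | PMod m => NDia m f
  | PNom j => NAt j f
  | PTest g => NAnd g f
  | PComp a1 a2 => dia a1 (dia a2 f)
  end.

Definition ntri {Mod Cmp : Type} (b : bool) (c : Cmp) (a1 a2 : path Mod Cmp)
  : node Mod Cmp := if b then NEq c a1 a2 else NNeq c a1 a2.

Definition Eqn {Mod Cmp : Type} (c : Cmp) (i j : nat) : node Mod Cmp :=
  NEq c (PNom i) (PNom j).
Definition NEqn {Mod Cmp : Type} (c : Cmp) (i j : nat) : node Mod Cmp :=
  NNeq c (PNom i) (PNom j).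

Record model (Mod Cmp : Type) := Model {
  M_N : Type;
  M_inh : inhabited M_N;
  M_R : Mod -> M_N -> M_N -> Prop;
  M_E : Cmp -> M_N -> M_N -> Prop;
  M_E_refl : forall c x, M_E c x x;
  M_E_sym : forall c x y, M_E c x y -> M_E c y x;
  M_E_trans : forall c x y z, M_E c x y -> M_E c y z -> M_E c x z;
  M_g : nat -> M_N;
  M_V : nat -> M_N -> Prop
}.

Fixpoint psat {Mod Cmp : Type} (M : model Mod Cmp) (a : path Mod Cmp)
  (n n' : M_N M) {struct a} : Prop :=
  match a with
  | PMod m => M_R M m n n'
  | PNom i => M_g M i = n'
  | PTest f => n = n' /\ nsat M f n
  | PComp a1 a2 => exists n'', psat M a1 n n'' /\ psat M a2 n'' n'
  end
with nsat {Mod Cmp : Type} (M : model Mod Cmp) (f : node Mod Cmp)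
  (n : M_N M) {struct f} : Prop :=
  match f with
  | NProp p => M_V M p n
  | NNom i => M_g M i = n
  | NBot => False
  | NImp f1 f2 => nsat M f1 n -> nsat M f2 n
  | NAt i f1 => nsat M f1 (M_g M i)
  | NDia m f1 => exists n', M_R M m n n' /\ nsat M f1 n'
  | NEq c a1 a2 => exists n' n'', psat M a1 n n' /\ psat M a2 n n'' /\ M_E M c n' n''
  | NNeq c a1 a2 => exists n' n'', psat M a1 n n' /\ psat M a2 n n'' /\ ~ M_E M c n' n''
  end.

Fixpoint nom_in_path {Mod Cmp : Type} (j : nat) (a : path Mod Cmp) : Prop :=
  match a with
  | PMod _ => False
  | PNom i => i = j
  | PTest f => nom_in_node j f
  | PComp a1 a2 => nom_in_path j a1 \/ nom_in_path j a2
  end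
with nom_in_node {Mod Cmp : Type} (j : nat) (f : node Mod Cmp) : Prop :=
  match f with
  | NProp _ => False
  | NNom i => i = j
  | NBot => False
  | NImp f1 f2 => nom_in_node j f1 \/ nom_in_node j f2
  | NAt i f1 => i = j \/ nom_in_node j f1
  | NDia _ f1 => nom_in_node j f1
  | NEq _ a1 a2 => nom_in_path j a1 \/ nom_in_path j a2
  | NNeq _ a1 a2 => nom_in_path j a1 \/ nom_in_path j a2
  end.

(* Sequents: finite sets represented as lists (only membership matters);
   "phi, Gamma" is rendered as phi :: Gamma. *)
Definition sequent (Mod Cmp : Type) : Type := (list (node Mod Cmp) * list (node Mod Cmp))%type.

Definition seq_form {Mod Cmp : Type} (f : node Mod Cmp) : Prop :=
  (exists i g, f = NAt i g) \/
  (exists b c i j, f = ntri b c (PNom i) (PNom j)).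

Definition wf_sequent {Mod Cmp : Type} (s : sequent Mod Cmp) : Prop :=
  (forall f, In f (fst s) -> seq_form f) /\ (forall f, In f (snd s) -> seq_form f).

Definition valid {Mod Cmp : Type} (s : sequent Mod Cmp) : Prop :=
  forall (M : model Mod Cmp) (n : M_N M),
    (forall g, In g (fst s) -> nsat M g n) ->
    exists d, In d (snd s) /\ nsat M d n.

Definition nom_in_sequent {Mod Cmp : Type} (j : nat) (s : sequent Mod Cmp) : Prop :=
  exists f, (In f (fst s) \/ In f (snd s)) /\ nom_in_node j f.

Definition ax_form {Mod Cmp : Type} (f : node Mod Cmp) : Prop :=
  (exists i p, f = NAt i (NProp p)) \/
  (exists i j, f = NAt i (NNom j)) \/
  (exists c i j, f = Eqn c i j).

Definition s1_form {Mod Cmp : Type} (f : node Mod Cmp) : Prop :=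
  (exists p, f = NProp p) \/ f = NBot \/ (exists a k, f = NDia a (NNom k)).

(* rule_inst ps s : s is the conclusion of an instance of a rule of G
   whose premisses are ps. *)
Inductive rule_inst {Mod Cmp : Type} : list (sequent Mod Cmp) -> sequent Mod Cmp -> Prop :=
| R_Ax : forall f G D, ax_form f -> rule_inst [] (f :: G, f :: D)
| R_Bot : forall i G D, rule_inst [] (NAt i NBot :: G, D)
| R_ImpL : forall i f g G D,
    rule_inst [(G, NAt i f :: D); (NAt i g :: G, D)] (NAt i (NImp f g) :: G, D)
| R_ImpR : forall i f g G D,
    rule_inst [(NAt i f :: G, NAt i g :: D)] (G, NAt i (NImp f g) :: D)
| R_AtT : forall i G D, rule_inst [(NAt i (NNom i) :: G, D)] (G, D)
| R_At5 : forall i j k G D,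
    rule_inst [(NAt j (NNom k) :: NAt i (NNom j) :: NAt i (NNom k) :: G, D)]
              (NAt i (NNom j) :: NAt i (NNom k) :: G, D)
| R_Nom : forall i j G D, ~ nom_in_sequent j (G, D) ->
    rule_inst [(NAt i (NNom j) :: G, D)] (G, D)
| R_S1 : forall i j f G D, s1_form f ->
    rule_inst [(NAt j f :: NAt i (NNom j) :: NAt i f :: G, D)]
              (NAt i (NNom j) :: NAt i f :: G, D)
| R_S2 : forall i j k a G D,
    rule_inst [(NAt i (NDia a (NNom k)) :: NAt j (NNom k) :: NAt i (NDia a (NNom j)) :: G, D)]
              (NAt j (NNom k) :: NAt i (NDia a (NNom j)) :: G, D)
| R_S3 : forall i j k c G D,
    rule_inst [(Eqn c j k :: NAt i (NNom j) :: Eqn c i k :: G, D)]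
              (NAt i (NNom j) :: Eqn c i k :: G, D)
| R_AtL : forall i j f G D, rule_inst [(NAt i f :: G, D)] (NAt j (NAt i f) :: G, D)
| R_AtR : forall i j f G D, rule_inst [(G, NAt i f :: D)] (G, NAt j (NAt i f) :: D)
| R_DiaL : forall i j a f G D,
    ~ nom_in_sequent j (NAt i (NDia a f) :: G, D) ->
    rule_inst [(NAt i (NDia a (NNom j)) :: NAt j f :: G, D)] (NAt i (NDia a f) :: G, D)
| R_DiaR : forall i j a f G D,
    rule_inst [(NAt i (NDia a (NNom j)) :: G, NAt i (NDia a f) :: NAt j f :: D)]
              (NAt i (NDia a (NNom j)) :: G, NAt i (NDia a f) :: D)
| R_TriL : forall (b : bool) c i j k (a1 a2 : path Mod Cmp) G D,
    j <> k ->
    ~ nom_in_sequent j (NAt i (ntri b c a1 a2) :: G, D) ->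
    ~ nom_in_sequent k (NAt i (ntri b c a1 a2) :: G, D) ->
    rule_inst [(NAt i (dia a1 (NNom j)) :: NAt i (dia a2 (NNom k))
                  :: ntri b c (PNom j) (PNom k) :: G, D)]
              (NAt i (ntri b c a1 a2) :: G, D)
| R_TriR : forall (b : bool) c i j k (a1 a2 : path Mod Cmp) G D,
    rule_inst [(NAt i (dia a1 (NNom j)) :: NAt i (dia a2 (NNom k)) :: G,
                NAt i (ntri b c a1 a2) :: ntri b c (PNom j) (PNom k) :: D)]
              (NAt i (dia a1 (NNom j)) :: NAt i (dia a2 (NNom k)) :: G,
               NAt i (ntri b c a1 a2) :: D)
| R_EqT : forall c i G D, rule_inst [(Eqn c i i :: G, D)] (G, D)
| R_Eq5 : forall c i j k G D,
    rule_inst [(Eqn c j k :: Eqn c i j :: Eqn c i k :: G, D)]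
              (Eqn c i j :: Eqn c i k :: G, D)
| R_NEqL : forall c i j G D, rule_inst [(G, Eqn c i j :: D)] (NEqn c i j :: G, D)
| R_NEqR : forall c i j G D, rule_inst [(Eqn c i j :: G, D)] (G, NEqn c i j :: D)
| R_Cut : forall f G D G' D',
    rule_inst [(G, f :: D); (f :: G', D')] (G ++ G', D ++ D')
| R_WL : forall f G D, rule_inst [(G, D)] (f :: G, D)
| R_WR : forall f G D, rule_inst [(G, D)] (G, f :: D).

(* The
   only rules that need more are (Nom), (<a>L) and (<▲>L), whose premisses
   mention fresh nominals: given a model of the conclusion's antecedent, the
   fresh nominals are re-interpreted as the required witnesses, which changes
   nothing else because satisfaction of a formula only depends on the values
   of the nominals occurring in it. *)

From Stdlib Require Import List.
From mathcomp Require Import ssreflect ssrfun ssrbool eqtype fintype.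
From Stdlib Require Import Classical PeanoNat.
Import ListNotations.

Scheme path_mind := Induction for path Sort Prop
with node_mind := Induction for node Sort Prop.
Combined Scheme path_node_mind from path_mind, node_mind.

Definition upd {A : Type} (g : nat -> A) (j : nat) (v : A) : nat -> A :=
  fun x => if Nat.eqb x j then v else g x.

Lemma upd_same {A : Type} (g : nat -> A) j v : upd g j v j = v.
Proof. by rewrite /upd Nat.eqb_refl. Qed.

Lemma upd_other {A : Type} (g : nat -> A) j v x : x <> j -> upd g j v x = g x.
Proof. by move=> /Nat.eqb_neq xj; rewrite /upd xj. Qed.

Section Soundness.
Context {Mod Cmp : Type}.
Implicit Types (M : model Mod Cmp) (m : Mod) (a : path Mod Cmp) (f : node Mod Cmp)
  (G D : list (node Mod Cmp)).

Lemma validE G D :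
  valid (G, D) <-> forall M n, Forall ((nsat M)^~ n) G -> Exists ((nsat M)^~ n) D.
Proof.
split=> Hv M n HG.
- by apply/Exists_exists; apply: Hv; apply/Forall_forall.
- by apply/Exists_exists; apply: Hv; apply/Forall_forall.
Qed.

Lemma valid_incl {G D G' D'} : incl G G' -> incl D D' -> valid (G, D) -> valid (G', D').
Proof.
move=> sGG' sDD' /validE Hv; apply/validE => M n HG'.
exact: incl_Exists sDD' (Hv M n (incl_Forall sGG' HG')).
Qed.

Lemma valid_entailed_hyp f G D :
  (forall M n, Forall ((nsat M)^~ n) G -> nsat M f n) -> valid (f :: G, D) -> valid (G, D).
Proof. by move=> Hf /validE Hv; apply/validE => M n HG; apply: Hv; constructor; auto. Qed.

Lemma nsat_dia M a f x : nsat M (dia a f) x <-> exists y, psat M a x y /\ nsat M f y.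
Proof.
elim: a f x => [m|i|h|a1 IH1 a2 IH2] f x /=.
- by [].
- by split=> [Hf | [y [<-]]] //; exists (M_g M i).
- split=> [Hhf | [y [[<- Hh] Hf]] Hnf]; last exact: Hnf Hh Hf.
  by exists x; apply: NNPP => Hno; apply: Hhf => Hh Hf; apply: Hno.
- split=> [/IH1 [w [H1 /IH2 [y [H2 Hf]]]] | [y [[w [H1 H2]] Hf]]].
  + by exists y; split=> //; exists w.
  + by apply/IH1; exists w; split=> //; apply/IH2; exists y.
Qed.

Lemma nsat_dia_nom M a j x : nsat M (dia a (NNom j)) x <-> psat M a x (M_g M j).
Proof. by rewrite nsat_dia; split=> [[y [Hy ->]] | Hj] //; exists (M_g M j). Qed.

Lemma nsat_ntri M b c a1 a2 x :
  nsat M (ntri b c a1 a2) x <->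
  exists y z, psat M a1 x y /\ psat M a2 x z /\ (if b then M_E M c y z else ~ M_E M c y z).
Proof. by case: b. Qed.

Lemma nom_in_ntri j b c a1 a2 :
  nom_in_node j (ntri b c a1 a2) <-> nom_in_path j a1 \/ nom_in_path j a2.
Proof. by case: b. Qed.

Definition reassign M (g : nat -> M_N M) : model Mod Cmp :=
  @Model Mod Cmp (M_N M) (M_inh M) (M_R M) (M_E M) (M_E_refl M) (M_E_sym M)
    (M_E_trans M) g (M_V M).

Lemma sat_reassign M g :
  (forall a, (forall i, nom_in_path i a -> g i = M_g M i) ->
     forall x y, psat (reassign M g) a x y <-> psat M a x y) /\
  (forall f, (forall i, nom_in_node i f -> g i = M_g M i) ->
     forall x, nsat (reassign M g) f x <-> nsat M f x).
Proof.
apply: path_node_mind => /=.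
- by [].
- by move=> i agree x y; rewrite agree.
- by move=> f IH agree x y; rewrite IH.
- move=> a1 IH1 a2 IH2 agree x y.
  have E1 := IH1 (fun i Hi => agree i (or_introl Hi)).
  have E2 := IH2 (fun i Hi => agree i (or_intror Hi)).
  by split=> -[w [H1 H2]]; exists w; rewrite ?E1 ?E2 in H1 H2 *.
- by [].
- by move=> i agree x; rewrite agree.
- by [].
- move=> f1 IH1 f2 IH2 agree x.
  by rewrite IH1 ?IH2 // => i Hi; apply: agree; [right | left].
- move=> i f IH agree x; rewrite agree; last by left.
  by apply: IH => k Hk; apply: agree; right.
- move=> m f IH agree x.
  by split=> -[w [Hw Hf]]; exists w; split=> //; [apply/IH | apply/IH].
- move=> c a1 IH1 a2 IH2 agree x.
  have E1 := IH1 (fun i Hi => agree i (or_introl Hi)).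
  have E2 := IH2 (fun i Hi => agree i (or_intror Hi)).
  by split=> -[y [z [Hy [Hz Hc]]]]; exists y, z; rewrite ?E1 ?E2 in Hy Hz *.
- move=> c a1 IH1 a2 IH2 agree x.
  have E1 := IH1 (fun i Hi => agree i (or_introl Hi)).
  have E2 := IH2 (fun i Hi => agree i (or_intror Hi)).
  by split=> -[y [z [Hy [Hz Hc]]]]; exists y, z; rewrite ?E1 ?E2 in Hy Hz *.
Qed.

Lemma psat_reassign M g a x y :
  (forall i, nom_in_path i a -> g i = M_g M i) ->
  psat (reassign M g) a x y <-> psat M a x y.
Proof. by move=> agree; apply: (proj1 (sat_reassign M g) a agree). Qed.

Lemma nsat_reassign M g f x :
  (forall i, nom_in_node i f -> g i = M_g M i) ->
  nsat (reassign M g) f x <-> nsat M f x.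
Proof. by move=> agree; apply: (proj2 (sat_reassign M g) f agree). Qed.

Lemma upd_fresh {A : Type} {g : nat -> A} {j v i} {s : sequent Mod Cmp} :
  ~ nom_in_sequent j s -> nom_in_sequent i s -> upd g j v i = g i.
Proof. by move=> Hj Hi; apply: upd_other => ij; apply: Hj; rewrite -ij. Qed.

Lemma valid_of_reassign F G D :
  (forall M n, Forall ((nsat M)^~ n) G ->
     exists g, (forall i, nom_in_sequent i (G, D) -> g i = M_g M i) /\
               Forall ((nsat (reassign M g))^~ n) F) ->
  valid (F ++ G, D) -> valid (G, D).
Proof.
move=> Hwit /validE Hv; apply/validE => M n HG.
have [g [agree HF]] := Hwit M n HG.
have agree_on f : In f G \/ In f D -> nsat (reassign M g) f n <-> nsat M f n.
  by move=> Hf; apply: nsat_reassign => i Hi; apply: agree; exists f.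
have HG' : Forall ((nsat (reassign M g))^~ n) G.
  by apply/Forall_forall => f Hf; apply/(agree_on f (or_introl Hf)); move/Forall_forall: HG; apply.
have /Exists_exists [d [Hd Hsd]] : Exists ((nsat (reassign M g))^~ n) D.
  by apply: Hv; apply/Forall_app.
by apply/Exists_exists; exists d; split=> //; apply/(agree_on d (or_intror Hd)).
Qed.

Lemma ax_sound f G D : valid (f :: G, f :: D).
Proof. by apply/validE => M n /Forall_cons_iff [Hf _]; left. Qed.

Lemma bot_sound i G D : valid (NAt i NBot :: G, D).
Proof. by apply/validE => M n /Forall_cons_iff [[]]. Qed.

Lemma impL_sound i f g G D :
  valid (G, NAt i f :: D) -> valid (NAt i g :: G, D) -> valid (NAt i (NImp f g) :: G, D).
Proof.
move=> /validE Hf /validE Hg; apply/validE => M n /Forall_cons_iff [/= Himp HG].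
case: (classic (nsat M f (M_g M i))) => [/Himp Hgi | Hnf].
- by apply: Hg; constructor.
- by case/Exists_cons: (Hf M n HG).
Qed.

Lemma impR_sound i f g G D :
  valid (NAt i f :: G, NAt i g :: D) -> valid (G, NAt i (NImp f g) :: D).
Proof.
move=> /validE Hv; apply/validE => M n HG.
case: (classic (Exists ((nsat M)^~ n) D)) => [HD | HnD]; first by right.
left => /= Hf.
by case/Exists_cons: (Hv M n (Forall_cons (NAt i f) Hf HG)).
Qed.

Lemma atT_sound i G D : valid (NAt i (NNom i) :: G, D) -> valid (G, D).
Proof. exact: valid_entailed_hyp. Qed.

Lemma at5_sound i j k G D :
  valid (NAt j (NNom k) :: NAt i (NNom j) :: NAt i (NNom k) :: G, D) ->
  valid (NAt i (NNom j) :: NAt i (NNom k) :: G, D).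
Proof.
apply: valid_entailed_hyp => M n /Forall_cons_iff [/= Hij /Forall_cons_iff [/= Hik _]].
by rewrite Hij Hik.
Qed.

Lemma s1_sound i j f G D :
  valid (NAt j f :: NAt i (NNom j) :: NAt i f :: G, D) ->
  valid (NAt i (NNom j) :: NAt i f :: G, D).
Proof.
apply: valid_entailed_hyp => M n /Forall_cons_iff [/= Hij /Forall_cons_iff [/= Hf _]].
by rewrite Hij.
Qed.

Lemma s2_sound i j k m G D :
  valid (NAt i (NDia m (NNom k)) :: NAt j (NNom k) :: NAt i (NDia m (NNom j)) :: G, D) ->
  valid (NAt j (NNom k) :: NAt i (NDia m (NNom j)) :: G, D).
Proof.
apply: valid_entailed_hyp => M n /Forall_cons_iff [/= Hjk /Forall_cons_iff [/= [w [Hw Hjw]] _]].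
by exists w; rewrite Hjk.
Qed.

Lemma s3_sound i j k c G D :
  valid (Eqn c j k :: NAt i (NNom j) :: Eqn c i k :: G, D) ->
  valid (NAt i (NNom j) :: Eqn c i k :: G, D).
Proof.
apply: valid_entailed_hyp => M n /Forall_cons_iff [/= Hij /Forall_cons_iff [/= Hik _]].
case: Hik => _ [_ [<- [<- Hc]]].
by exists (M_g M j), (M_g M k); rewrite Hij.
Qed.

Lemma atL_sound i j f G D : valid (NAt i f :: G, D) -> valid (NAt j (NAt i f) :: G, D).
Proof. by move=> /validE Hv; apply/validE => M n /Forall_cons_iff [Hf HG]; apply: Hv; constructor. Qed.

Lemma atR_sound i j f G D : valid (G, NAt i f :: D) -> valid (G, NAt j (NAt i f) :: D).
Proof. by move=> /validE Hv; apply/validE => M n /Hv /Exists_cons []; [left | right]. Qed.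

Lemma nom_sound i j G D :
  ~ nom_in_sequent j (G, D) -> valid (NAt i (NNom j) :: G, D) -> valid (G, D).
Proof.
move=> Hj; apply: (valid_of_reassign [NAt i (NNom j)]) => M n _.
exists (upd (M_g M) j (M_g M i)); split; first by move=> k; apply: upd_fresh.
constructor=> //=; rewrite upd_same.
by case: (Nat.eq_dec i j) => [-> | ij]; rewrite ?upd_same ?upd_other.
Qed.

Lemma diaL_sound i j m f G D :
  ~ nom_in_sequent j (NAt i (NDia m f) :: G, D) ->
  valid (NAt i (NDia m (NNom j)) :: NAt j f :: G, D) -> valid (NAt i (NDia m f) :: G, D).
Proof.
move=> Hj Hv; apply: (valid_of_reassign [NAt i (NDia m (NNom j)); NAt j f]); last first.
  by apply: valid_incl Hv => // h /=; tauto.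
move=> M n /Forall_cons_iff [/= [w [Hiw Hw]] _].
set g := upd (M_g M) j w.
have agree k : nom_in_sequent k (NAt i (NDia m f) :: G, D) -> g k = M_g M k.
  exact: upd_fresh.
have gi : g i = M_g M i by apply: agree; exists (NAt i (NDia m f)); split; [left; left | left].
have Hf : nsat (reassign M g) f w.
  by apply/nsat_reassign => // k Hk; apply: agree; exists (NAt i (NDia m f)); split; [left; left | right].
have gj : g j = w by exact: upd_same.
exists g; split=> //.
by constructor; [exists w; rewrite /= gi gj | constructor; rewrite /= ?gj].
Qed.

Lemma diaR_sound i j m f G D :
  valid (NAt i (NDia m (NNom j)) :: G, NAt i (NDia m f) :: NAt j f :: D) ->
  valid (NAt i (NDia m (NNom j)) :: G, NAt i (NDia m f) :: D).
Proof.
move=> /validE Hv; apply/validE => M n HG.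
have /Forall_cons_iff [/= [w [Hiw Hjw]] _] := HG.
case/Exists_cons: (Hv M n HG) => [Hdia | /Exists_cons [Hj | HD]]; [by left | left | by right].
by exists w; split=> //; rewrite -Hjw.
Qed.

Lemma triL_sound b c i j k a1 a2 G D :
  j <> k ->
  ~ nom_in_sequent j (NAt i (ntri b c a1 a2) :: G, D) ->
  ~ nom_in_sequent k (NAt i (ntri b c a1 a2) :: G, D) ->
  valid (NAt i (dia a1 (NNom j)) :: NAt i (dia a2 (NNom k)) :: ntri b c (PNom j) (PNom k) :: G, D) ->
  valid (NAt i (ntri b c a1 a2) :: G, D).
Proof.
set s := (NAt i (ntri b c a1 a2) :: G, D) => jk Hj Hk Hv.
apply: (valid_of_reassign
  [NAt i (dia a1 (NNom j)); NAt i (dia a2 (NNom k)); ntri b c (PNom j) (PNom k)]); last first.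
  by apply: valid_incl Hv => // h /=; tauto.
move=> M n /Forall_cons_iff [/nsat_ntri [y [z [Hy [Hz Hc]]]] _].
set g := upd (upd (M_g M) j y) k z.
have agree l : nom_in_sequent l s -> g l = M_g M l.
  by move=> Hl; rewrite /g (upd_fresh Hk Hl) (upd_fresh Hj Hl).
have in_head l : nom_in_node l (NAt i (ntri b c a1 a2)) -> nom_in_sequent l s.
  by exists (NAt i (ntri b c a1 a2)); split; [left; left |].
have in_ntri l : nom_in_path l a1 \/ nom_in_path l a2 -> nom_in_sequent l s.
  by move=> Hl; apply: in_head; right; apply/nom_in_ntri.
have gi : g i = M_g M i by apply: agree; apply: in_head; left.
have gj : g j = y by rewrite /g upd_other // upd_same.
have gk : g k = z by rewrite /g upd_same.
have Ha1 : psat (reassign M g) a1 (g i) (g j).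
  by rewrite gi gj; apply/psat_reassign => // l Hl; apply: agree; apply: in_ntri; left.
have Ha2 : psat (reassign M g) a2 (g i) (g k).
  by rewrite gi gk; apply/psat_reassign => // l Hl; apply: agree; apply: in_ntri; right.
exists g; split=> //.
constructor; first exact/nsat_dia_nom.
constructor; first exact/nsat_dia_nom.
by constructor=> //; apply/nsat_ntri; exists (g j), (g k); rewrite gj gk.
Qed.

Lemma triR_sound b c i j k a1 a2 G D :
  valid (NAt i (dia a1 (NNom j)) :: NAt i (dia a2 (NNom k)) :: G,
         NAt i (ntri b c a1 a2) :: ntri b c (PNom j) (PNom k) :: D) ->
  valid (NAt i (dia a1 (NNom j)) :: NAt i (dia a2 (NNom k)) :: G,
         NAt i (ntri b c a1 a2) :: D).
Proof.
move=> /validE Hv; apply/validE => M n HG.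
have /Forall_cons_iff [/nsat_dia_nom Hj /Forall_cons_iff [/nsat_dia_nom Hk _]] := HG.
case/Exists_cons: (Hv M n HG) => [Htri | /Exists_cons [Hjk | HD]]; [by left | left | by right].
case/nsat_ntri: Hjk => _ [_ [<- [<- Hc]]].
by apply/nsat_ntri; exists (M_g M j), (M_g M k).
Qed.

Lemma eqT_sound c i G D : valid (Eqn c i i :: G, D) -> valid (G, D).
Proof.
apply: valid_entailed_hyp => M n _.
by exists (M_g M i), (M_g M i); split=> //; split=> //; apply: M_E_refl.
Qed.

Lemma eq5_sound c i j k G D :
  valid (Eqn c j k :: Eqn c i j :: Eqn c i k :: G, D) ->
  valid (Eqn c i j :: Eqn c i k :: G, D).
Proof.
apply: valid_entailed_hyp => M n /Forall_cons_iff [/= Hij /Forall_cons_iff [/= Hik _]].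
case: Hij Hik => _ [_ [<- [<- Hij]]] [_ [_ [<- [<- Hik]]]].
exists (M_g M j), (M_g M k); split; [|split] => //.
exact: M_E_trans (M_E_sym _ _ _ _ Hij) Hik.
Qed.

Lemma neqL_sound c i j G D : valid (G, Eqn c i j :: D) -> valid (NEqn c i j :: G, D).
Proof.
move=> /validE Hv; apply/validE => M n /Forall_cons_iff [/= [_ [_ [<- [<- Hne]]]] HG].
by case/Exists_cons: (Hv M n HG) => // -[_ [_ [<- [<-]]]].
Qed.

Lemma neqR_sound c i j G D : valid (Eqn c i j :: G, D) -> valid (G, NEqn c i j :: D).
Proof.
move=> /validE Hv; apply/validE => M n HG.
case: (classic (M_E M c (M_g M i) (M_g M j))) => Hc.
- by right; apply: Hv; constructor => //; exists (M_g M i), (M_g M j).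
- by left; exists (M_g M i), (M_g M j).
Qed.

Lemma cut_sound f G D G' D' :
  valid (G, f :: D) -> valid (f :: G', D') -> valid (G ++ G', D ++ D').
Proof.
move=> /validE Hv /validE Hv'; apply/validE => M n /Forall_app [HG HG'].
apply/Exists_app; case/Exists_cons: (Hv M n HG) => [Hf | HD]; last by left.
by right; apply: Hv'; constructor.
Qed.

Lemma rule_inst_sound ps (s : sequent Mod Cmp) :
  rule_inst ps s -> (forall p, In p ps -> valid p) -> valid s.
Proof.
case=> [f G D _|i G D|i f g G D|i f g G D|i G D|i j k G D|i j G D Hj|i j f G D _
       |i j k m G D|i j k c G D|i j f G D|i j f G D|i j m f G D Hj|i j m f G D
       |b c i j k a1 a2 G D jk Hj Hk|b c i j k a1 a2 G D|c i G D|c i j k G D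
       |c i j G D|c i j G D|f G D G' D'|f G D|f G D] Hv;
  [ exact: ax_sound | exact: bot_sound | apply: impL_sound | apply: impR_sound
  | apply: atT_sound | apply: at5_sound | apply: (nom_sound _ j) => // | apply: s1_sound
  | apply: s2_sound | apply: s3_sound | apply: atL_sound | apply: atR_sound
  | apply: (diaL_sound _ j) => // | apply: diaR_sound | apply: (triL_sound _ _ _ j k) => //
  | apply: triR_sound | apply: eqT_sound | apply: eq5_sound | apply: neqL_sound
  | apply: neqR_sound | apply: (cut_sound f)
  | apply: (valid_incl (incl_tl f (incl_refl G)) (incl_refl D))
  | apply: (valid_incl (incl_refl G) (incl_tl f (incl_refl D))) ];
  by apply: Hv; rewrite /=; tauto.
Qed.

End Soundness.

Theorem lemma1 (Mod Cmp : finType) (ps : list (sequent Mod Cmp)) (s : sequent Mod Cmp) :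
  rule_inst ps s ->
  (forall p, In p ps -> wf_sequent p) -> wf_sequent s ->
  (forall p, In p ps -> valid p) ->
  valid s.
Proof. by move=> Hrule _ _; apply: rule_inst_sound. Qed.
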